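(* Let $n\ge4$. Every folded ribbon $n$-stick unknot $\mathcal{U}_{w,F}$ whose diagram $\mathcal{U}$ is a non-degenerate $n$-gon with all fold (interior) angles $\alpha_i$ satisfying $\frac{\pi}{2}\le\alpha_i<\pi$ has $\operatorname{Rib}(\mathcal{U}_{w,F})\ge n\cot(\frac{\pi}{n})$. Thus the minimum folded ribbonlength of such unknots is bounded below by $n\cot(\frac{\pi}{n})$, and the minimum occurs when $\mathcal{U}$ is a regular $n$-gon.
   Context: Non-degenerate $n$-gon: side lengths nonzero, interior angles not equal to $\pi$. For width $w>0$, the folded ribbon $\mathcal{U}_{w,F}$ is a flat strip of width $w$ centred on $\mathcal{U}$ (boundary parallel to and at distance $w/2$ from each edge), folded at each vertex along a fold line through the vertex perpendicular to the bisector of the angle there; it is a piecewise-linear immersion of an annulus or Möbius band into the plane whose only singularities are the pairwise disjoint fold lines, with consistent crossing information; $F$ is the folding information (which layer lies on top at each fold). The folded ribbonlength is $\operatorname{Rib}(\mathcal{U}_{w,F})=\operatorname{Len}(\mathcal{U})/w$. *)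

From Stdlib Require Import Reals List Arith.
Open Scope R_scope.

Definition pt : Type := (R * R)%type.

Definition vadd (p q : pt) : pt := (fst p + fst q, snd p + snd q).
Definition vsub (p q : pt) : pt := (fst p - fst q, snd p - snd q).
Definition vscale (c : R) (p : pt) : pt := (c * fst p, c * snd p).
Definition dot (p q : pt) : R := fst p * fst q + snd p * snd q.
Definition cross (p q : pt) : R := fst p * snd q - snd p * fst q.
Definition vnorm (p : pt) : R := sqrt (dot p p).
Definition unitv (p : pt) : pt := vscale (/ vnorm p) p.

(* A closed polygon with n vertices v 0, ..., v (n-1); indices taken mod n. *)
Definition vtx (n : nat) (v : nat -> pt) (i : nat) : pt := v (i mod n).
Definition nxt (n : nat) (v : nat -> pt) (i : nat) : pt := vtx n v (S i).
Definition prv (n : nat) (v : nat -> pt) (i : nat) : pt := vtx n v (i + n - 1).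

(* Non-degenerate: side lengths nonzero, interior angles not equal to pi.
   The angle condition is expressed as: the two incident edges at each
   vertex are not collinear (cross product nonzero). *)
Definition nondegenerate (n : nat) (v : nat -> pt) : Prop :=
  forall i, (i < n)%nat ->
    nxt n v i <> vtx n v i /\
    cross (vsub (vtx n v i) (prv n v i)) (vsub (nxt n v i) (vtx n v i)) <> 0.

(* Strictly convex polygon (either orientation): every vertex not on edge i
   lies strictly on the same side of the line through edge i. *)
Definition convex_polygon (n : nat) (v : nat -> pt) : Prop :=
  exists s : R, (s = 1 \/ s = -1) /\
    forall i j, (i < n)%nat -> (j < n)%nat -> j <> i -> j <> (S i mod n)%nat ->
      s * cross (vsub (nxt n v i) (vtx n v i)) (vsub (v j) (vtx n v i)) > 0.

Definition int_angle (n : nat) (v : nat -> pt) (i : nat) : R :=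
  let a := vsub (prv n v i) (vtx n v i) in
  let b := vsub (nxt n v i) (vtx n v i) in
  acos (dot a b / (vnorm a * vnorm b)).

(* Fold line at vertex i for width w: the segment through vertex i,
   perpendicular to the angle bisector (direction unit(b) - unit(a)),
   cut out by the ribbon of width w, i.e. of total length w / cos(alpha_i/2). *)
Definition fold_dir (n : nat) (v : nat -> pt) (i : nat) : pt :=
  let a := vsub (prv n v i) (vtx n v i) in
  let b := vsub (nxt n v i) (vtx n v i) in
  unitv (vsub (unitv b) (unitv a)).

Definition fold_half (n : nat) (v : nat -> pt) (w : R) (i : nat) : R :=
  w / (2 * cos (int_angle n v i / 2)).

Definition on_fold_line (n : nat) (v : nat -> pt) (w : R) (i : nat) (p : pt) : Prop :=
  exists t : R, -1 <= t <= 1 /\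
    p = vadd (vtx n v i) (vscale (t * fold_half n v w i) (fold_dir n v i)).

(* The folded ribbon U_{w,F} exists: fold lines pairwise disjoint. *)
Definition folds_disjoint (n : nat) (v : nat -> pt) (w : R) : Prop :=
  forall i j, (i < n)%nat -> (j < n)%nat -> i <> j ->
    forall p, on_fold_line n v w i p -> on_fold_line n v w j p -> False.

Definition folded_ribbon (n : nat) (v : nat -> pt) (w : R) : Prop :=
  0 < w /\ folds_disjoint n v w.

Definition poly_len (n : nat) (v : nat -> pt) : R :=
  fold_right Rplus 0 (map (fun i => vnorm (vsub (nxt n v i) (vtx n v i))) (seq 0 n)).

Definition ribbonlength (n : nat) (v : nat -> pt) (w : R) : R := poly_len n v / w.

Definition regular_polygon (n : nat) (v : nat -> pt) : Prop :=
  nondegenerate n v /\ convex_polygon n v /\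
  (forall i j, (i < n)%nat -> (j < n)%nat ->
     vnorm (vsub (nxt n v i) (vtx n v i)) = vnorm (vsub (nxt n v j) (vtx n v j)) /\
     int_angle n v i = int_angle n v j).

From Stdlib Require Import Reals List Arith Lra Lia Psatz.
Open Scope R_scope.

(* The fold line at a vertex with interior angle α is a supporting line of the (strictly
   convex) polygon; each of its halves lies over one incident edge and covers a length
   (w/2) tan(α/2) of it.  The regions over different edges meet only at vertices, so the folds
   are disjoint exactly when, along every edge, the two covered lengths add up to less than the
   edge.  Summing over the edges gives w Σ tan(α_i/2) < Len, and since Σ α_i = (n - 2)π and tan
   is convex on (0, π/2), Jensen's inequality gives Σ tan(α_i/2) >= n cot(π/n).  The regular
   n-gon attains the bound as w increases to its side length divided by cot(π/n). *)

(** * Finite sums *)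

Fixpoint rsum (f : nat -> R) (N : nat) : R :=
  match N with O => 0 | S k => rsum f k + f k end.

Lemma rsum_ext f g N : (forall k, (k < N)%nat -> f k = g k) -> rsum f N = rsum g N.
Proof.
  induction N as [|N IH]; intros H; simpl; [reflexivity|].
  rewrite IH by (intros; apply H; lia). rewrite H by lia. reflexivity.
Qed.

Lemma rsum_plus f g N : rsum (fun k => f k + g k) N = rsum f N + rsum g N.
Proof. induction N as [|N IH]; simpl; [ring|]. rewrite IH. ring. Qed.

Lemma rsum_scal c f N : rsum (fun k => c * f k) N = c * rsum f N.
Proof. induction N as [|N IH]; simpl; [ring|]. rewrite IH. ring. Qed.

Lemma rsum_const c N : rsum (fun _ => c) N = INR N * c.
Proof. induction N as [|N IH]; simpl rsum; [simpl; ring|]. rewrite IH, S_INR. ring. Qed.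

Lemma rsum_le f g N : (forall k, (k < N)%nat -> f k <= g k) -> rsum f N <= rsum g N.
Proof.
  induction N as [|N IH]; intros H; simpl; [lra|].
  pose proof (H N ltac:(lia)). pose proof (IH ltac:(intros; apply H; lia)). lra.
Qed.

Lemma rsum_lt f g N : (0 < N)%nat -> (forall k, (k < N)%nat -> f k < g k) ->
  rsum f N < rsum g N.
Proof.
  destruct N as [|N]; intros HN H; [lia|]. simpl.
  pose proof (H N ltac:(lia)).
  pose proof (rsum_le f g N ltac:(intros; apply Rlt_le, H; lia)). lra.
Qed.

Lemma rsum_shift f N : rsum f (S N) = f O + rsum (fun k => f (S k)) N.
Proof. induction N as [|N IH]; simpl in *; [ring|]. rewrite IH. ring. Qed.

Lemma rsum_shift1 f N : rsum (fun k => f (S k)) N = rsum f N - f O + f N.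
Proof. pose proof (rsum_shift f N) as H. simpl in H. lra. Qed.

Lemma rsum_split f a b : rsum f (a + b) = rsum f a + rsum (fun t => f (a + t)%nat) b.
Proof.
  induction b as [|b IH]; simpl; [rewrite Nat.add_0_r; ring|].
  rewrite Nat.add_succ_r. simpl. rewrite IH. ring.
Qed.

Lemma fold_right_map_seq f a N :
  fold_right Rplus 0 (map f (seq a N)) = rsum (fun k => f (a + k)%nat) N.
Proof.
  revert a; induction N as [|N IH]; intros a; [reflexivity|].
  simpl seq. simpl map. simpl fold_right. rewrite IH, rsum_shift, Nat.add_0_r.
  f_equal. apply rsum_ext. intros k _. f_equal. lia.
Qed.

(** * Vectors and angles in the plane *)

Definition vopp (p : pt) : pt := (- fst p, - snd p).

Lemma dot_self_nonneg p : 0 <= dot p p.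
Proof. destruct p as [x y]; unfold dot; simpl; nra. Qed.

Lemma dot_self_pos p : p <> (0, 0) -> 0 < dot p p.
Proof.
  destruct p as [x y]; unfold dot; simpl; intros Hp.
  destruct (Req_dec x 0) as [->|Hx]; destruct (Req_dec y 0) as [->|Hy];
    [now contradiction Hp | nra | nra | nra].
Qed.

Lemma vnorm_sqr p : vnorm p * vnorm p = dot p p.
Proof. apply sqrt_sqrt, dot_self_nonneg. Qed.

Lemma vnorm_pos p : p <> (0, 0) -> 0 < vnorm p.
Proof. intros Hp; apply sqrt_lt_R0, dot_self_pos, Hp. Qed.

Lemma vnorm_vopp p : vnorm (vopp p) = vnorm p.
Proof. destruct p; unfold vnorm, vopp, dot; simpl; f_equal; ring. Qed.

Lemma dot_cross_sqr a b :
  dot a b * dot a b + cross a b * cross a b = dot a a * dot b b.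
Proof. destruct a, b; unfold dot, cross; simpl; ring. Qed.

Lemma cross_antisym a b : cross a b = - cross b a.
Proof. destruct a, b; unfold cross; simpl; ring. Qed.

Lemma dot_comm a b : dot a b = dot b a.
Proof. destruct a, b; unfold dot; simpl; ring. Qed.

Lemma cross_self a : cross a a = 0.
Proof. destruct a; unfold cross; simpl; ring. Qed.

Lemma cross_vopp_l a b : cross (vopp a) b = - cross a b.
Proof. destruct a, b; unfold cross, vopp; simpl; ring. Qed.

Lemma cross_vopp_r a b : cross a (vopp b) = - cross a b.
Proof. destruct a, b; unfold cross, vopp; simpl; ring. Qed.

Lemma cross_vsub_r a b c : cross a (vsub b c) = cross a b - cross a c.
Proof. destruct a, b, c; unfold cross, vsub; simpl; ring. Qed.

Lemma cross_vsub_l a b c : cross (vsub a b) c = cross a c - cross b c.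
Proof. destruct a, b, c; unfold cross, vsub; simpl; ring. Qed.

Lemma dot_vsub4 p q r s : dot (vsub p q) (vsub r s) = dot p r - dot p s - dot q r + dot q s.
Proof. destruct p, q, r, s; unfold dot, vsub; simpl; ring. Qed.

Lemma vopp_involutive a : vopp (vopp a) = a.
Proof. destruct a; unfold vopp; simpl; f_equal; ring. Qed.

Lemma vopp_neq0 a : a <> (0, 0) -> vopp a <> (0, 0).
Proof.
  destruct a as [x y]; unfold vopp; simpl; intros Ha E; apply Ha.
  injection E; intros; f_equal; lra.
Qed.

Lemma dot_vscale k l p q : dot (vscale k p) (vscale l q) = k * l * dot p q.
Proof. destruct p, q; unfold dot, vscale; simpl; ring. Qed.

Lemma unitv_unit p : p <> (0, 0) -> dot (unitv p) (unitv p) = 1.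
Proof.
  intros Hp. pose proof (vnorm_pos p Hp). pose proof (vnorm_sqr p).
  unfold unitv. rewrite dot_vscale, <- vnorm_sqr. field. lra.
Qed.

Lemma unitv_vopp p : unitv (vopp p) = vopp (unitv p).
Proof.
  unfold unitv. rewrite vnorm_vopp.
  destruct p; unfold vscale, vopp; simpl; f_equal; ring.
Qed.

Definition ang (a b : pt) : R := acos (dot a b / (vnorm a * vnorm b)).

Lemma ang_bound a b : 0 <= ang a b <= PI.
Proof. apply acos_bound. Qed.

Lemma ang_cos a b : a <> (0, 0) -> b <> (0, 0) ->
  cos (ang a b) * (vnorm a * vnorm b) = dot a b.
Proof.
  intros Ha Hb. pose proof (vnorm_pos a Ha). pose proof (vnorm_pos b Hb).
  pose proof (vnorm_sqr a). pose proof (vnorm_sqr b). pose proof (dot_cross_sqr a b).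
  assert (Hab : 0 < vnorm a * vnorm b) by nra.
  unfold ang. set (q := dot a b / (vnorm a * vnorm b)).
  assert (Hq : dot a b = q * (vnorm a * vnorm b)) by (unfold q; field; lra).
  rewrite cos_acos; [lra|].
  assert (q * q <= 1); [|nra].
  apply (Rmult_le_reg_r ((vnorm a * vnorm b) * (vnorm a * vnorm b))); nra.
Qed.

Lemma dot_unitv_ang a b : a <> (0, 0) -> b <> (0, 0) -> dot (unitv a) (unitv b) = cos (ang a b).
Proof.
  intros Ha Hb. pose proof (ang_cos a b Ha Hb) as Hc.
  pose proof (vnorm_pos a Ha). pose proof (vnorm_pos b Hb).
  unfold unitv. rewrite dot_vscale, <- Hc. field. lra.
Qed.

Lemma ang_sin a b : a <> (0, 0) -> b <> (0, 0) ->
  sin (ang a b) * (vnorm a * vnorm b) = Rabs (cross a b).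
Proof.
  intros Ha Hb. pose proof (ang_cos a b Ha Hb) as Hc.
  pose proof (vnorm_pos a Ha). pose proof (vnorm_pos b Hb).
  pose proof (vnorm_sqr a). pose proof (vnorm_sqr b). pose proof (dot_cross_sqr a b).
  pose proof (ang_bound a b). pose proof (sin2_cos2 (ang a b)) as Hsc; unfold Rsqr in Hsc.
  assert (Hs : 0 <= sin (ang a b)) by (apply sin_ge_0; lra).
  assert (Hab : 0 < vnorm a * vnorm b) by nra.
  apply Rsqr_inj; [nra | apply Rabs_pos |].
  rewrite <- Rsqr_abs. unfold Rsqr.
  assert (E : sin (ang a b) * sin (ang a b) = 1 - cos (ang a b) * cos (ang a b)) by lra.
  transitivity (sin (ang a b) * sin (ang a b) * ((vnorm a * vnorm b) * (vnorm a * vnorm b)));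
    [ring | rewrite E]. nra.
Qed.

Lemma ang_eq_of_cos a b t : a <> (0, 0) -> b <> (0, 0) -> 0 <= t <= PI ->
  cos t * (vnorm a * vnorm b) = dot a b -> ang a b = t.
Proof.
  intros Ha Hb Ht Hc. pose proof (vnorm_pos a Ha). pose proof (vnorm_pos b Hb).
  unfold ang. rewrite <- Hc.
  replace (cos t * (vnorm a * vnorm b) / (vnorm a * vnorm b)) with (cos t) by (field; lra).
  apply acos_cos, Ht.
Qed.

Lemma ang_pos_lt_PI a b : a <> (0, 0) -> b <> (0, 0) -> cross a b <> 0 ->
  0 < ang a b < PI.
Proof.
  intros Ha Hb Hcr. pose proof (ang_sin a b Ha Hb) as Hs.
  pose proof (Rabs_pos_lt _ Hcr). pose proof (ang_bound a b).
  assert (sin (ang a b) <> 0) by (intros E; rewrite E in Hs; lra).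
  split.
  - destruct (Req_dec (ang a b) 0) as [E|]; [rewrite E, sin_0 in *|]; lra.
  - destruct (Req_dec (ang a b) PI) as [E|]; [rewrite E, sin_PI in *|]; lra.
Qed.

Lemma ang_sym a b : ang a b = ang b a.
Proof. unfold ang, dot; destruct a, b; simpl; f_equal; f_equal; ring. Qed.

Lemma ang_vopp_l a b : ang (vopp a) b = PI - ang a b.
Proof.
  unfold ang. rewrite vnorm_vopp, <- acos_opp. f_equal.
  unfold dot, vopp; destruct a, b; simpl. unfold Rdiv. ring.
Qed.

Lemma ang_vopp_r a b : ang a (vopp b) = PI - ang a b.
Proof. rewrite ang_sym, ang_vopp_l, ang_sym. reflexivity. Qed.

Lemma ang_self a : a <> (0, 0) -> ang a a = 0.
Proof.
  intros Ha. apply ang_eq_of_cos; auto; [pose proof PI_RGT_0; lra|].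
  rewrite cos_0, vnorm_sqr. ring.
Qed.

Lemma sum_le_PI_of_sin_nonneg x y : 0 <= x <= PI -> 0 <= y <= PI ->
  x < PI \/ y < PI -> 0 <= sin (x + y) -> x + y <= PI.
Proof.
  intros Hx Hy Hlt Hs. destruct (Rle_dec (x + y) PI) as [|Hgt]; auto.
  assert (sin (x + y) < 0) by (apply sin_lt_0; lra). lra.
Qed.

(* [c] lies inside the angle from [a] to [b], which opens towards the side [sg]. *)
Lemma ang_add sg a b c : sg = 1 \/ sg = -1 ->
  a <> (0, 0) -> b <> (0, 0) -> c <> (0, 0) ->
  0 <= sg * cross a c -> 0 <= sg * cross c b -> 0 <= sg * cross a b ->
  0 < sg * cross a c \/ 0 < sg * cross c b ->
  ang a c + ang c b = ang a b.
Proof.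
  intros Hsg Ha Hb Hc Hac Hcb Hab Hstrict.
  assert (Habs : forall z, 0 <= sg * z -> Rabs z = sg * z)
    by (intros z Hz; destruct Hsg as [-> | ->];
        [rewrite Rabs_pos_eq | rewrite Rabs_left1]; lra).
  assert (Hsg2 : sg * sg = 1) by (destruct Hsg as [-> | ->]; lra).
  pose proof (vnorm_pos a Ha) as Na. pose proof (vnorm_pos b Hb) as Nb.
  pose proof (vnorm_pos c Hc) as Nc. pose proof (vnorm_sqr c) as Nc2.
  pose proof (ang_cos a c Ha Hc) as Cx. pose proof (ang_sin a c Ha Hc) as Sx.
  pose proof (ang_cos c b Hc Hb) as Cy. pose proof (ang_sin c b Hc Hb) as Sy.
  rewrite Habs in Sx, Sy by assumption.
  pose proof (ang_bound a c) as Bx. pose proof (ang_bound c b) as By.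
  set (x := ang a c) in *. set (y := ang c b) in *.
  assert (Hcos : cos (x + y) * (vnorm a * vnorm b) = dot a b).
  { apply (Rmult_eq_reg_r (vnorm c * vnorm c)); [|nra].
    rewrite cos_plus.
    transitivity ((cos x * (vnorm a * vnorm c)) * (cos y * (vnorm c * vnorm b))
      - (sin x * (vnorm a * vnorm c)) * (sin y * (vnorm c * vnorm b))); [ring|].
    rewrite Cx, Cy, Sx, Sy, Nc2.
    transitivity (dot a c * dot c b - sg * sg * (cross a c * cross c b)); [ring|].
    rewrite Hsg2. destruct a, b, c; unfold dot, cross; simpl; ring. }
  assert (Hsin : sin (x + y) * (vnorm a * vnorm b) = sg * cross a b).
  { apply (Rmult_eq_reg_r (vnorm c * vnorm c)); [|nra].
    rewrite sin_plus.
    transitivity ((sin x * (vnorm a * vnorm c)) * (cos y * (vnorm c * vnorm b))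
      + (cos x * (vnorm a * vnorm c)) * (sin y * (vnorm c * vnorm b))); [ring|].
    rewrite Cx, Cy, Sx, Sy, Nc2. destruct a, b, c; unfold dot, cross; simpl; ring. }
  symmetry; apply ang_eq_of_cos; auto.
  split; [lra|]. apply sum_le_PI_of_sin_nonneg; try lra.
  - destruct Hstrict as [H|H]; [left|right].
    + destruct (Req_dec x PI) as [E|]; [rewrite E, sin_PI in Sx; nra | lra].
    + destruct (Req_dec y PI) as [E|]; [rewrite E, sin_PI in Sy; nra | lra].
  - apply (Rmult_le_reg_r (vnorm a * vnorm b)); nra.
Qed.

(* When a polygon lies on the side [sg] of each of its edges (as in [convex_polygon]),
   [perp sg d] is the outward normal of its edge [d], of the same length. *)
Definition perp (sg : R) (d : pt) : pt := (sg * snd d, - sg * fst d).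

Lemma dot_perp w sg d : dot w (perp sg d) = - sg * cross d w.
Proof. destruct w, d; unfold dot, perp, cross; simpl; ring. Qed.

Lemma half_angle_sqr al : 0 <= al <= PI ->
  0 <= sin (al / 2) /\ 0 <= cos (al / 2) /\
  sin (al / 2) * sin (al / 2) = (1 - cos al) / 2 /\ cos (al / 2) * cos (al / 2) = (1 + cos al) / 2.
Proof.
  intros Hal. pose proof PI_RGT_0.
  replace (cos al) with (cos (2 * (al / 2))) by (f_equal; field).
  rewrite cos_2a_sin at 1. rewrite cos_2a_cos.
  repeat split; [apply sin_ge_0 | apply cos_ge_0 | field | field]; lra.
Qed.

Lemma unitv_sub_unit U A sg al : dot U U = 1 -> dot A A = 1 -> sg * sg = 1 -> 0 < al <= PI ->
  dot A U = cos al -> dot A (perp sg U) < 0 ->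
  unitv (vsub U A) = vadd (vscale (sin (al / 2)) U) (vscale (cos (al / 2)) (perp sg U)).
Proof.
  intros HU HA Hsg Hal Hx HAN. pose proof PI_RGT_0.
  destruct (half_angle_sqr al) as [Hs [Hc [Hs2 Hc2]]]; [lra|].
  assert (Hx1 : cos al < 1) by (rewrite <- cos_0; apply cos_decreasing_1; lra).
  set (x := cos al) in *. set (s := sin (al / 2)) in *. set (c := cos (al / 2)) in *.
  destruct U as [u1 u2], A as [a1 a2].
  unfold dot, perp, unitv, vsub, vadd, vscale, vnorm, dot in *; simpl in *.
  set (q := sqrt ((u1 - a1) * (u1 - a1) + (u2 - a2) * (u2 - a2))).
  assert (Hq2 : q * q = 2 - 2 * x) by (unfold q; rewrite sqrt_sqrt by nra; nra).
  assert (Hq : 0 < q) by (unfold q; apply sqrt_lt_R0; nra).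
  assert (Es : s * q = 1 - x).
  { apply Rsqr_inj; [nra | lra |]. unfold Rsqr.
    transitivity ((s * s) * (q * q)); [ring|]. rewrite Hs2, Hq2. field. }
  assert (Ec : c * q = - (a1 * (sg * u2) + a2 * (- sg * u1))).
  { apply Rsqr_inj; [nra | lra |]. unfold Rsqr.
    transitivity ((c * c) * (q * q)); [ring|]. rewrite Hc2, Hq2, <- Hx.
    transitivity (sg * sg * ((a1 * u2 - a2 * u1) * (a1 * u2 - a2 * u1))); [|ring].
    rewrite Hsg. nra. }
  f_equal; apply (Rmult_eq_reg_r q); try lra.
  - transitivity (u1 - a1); [field; lra|].
    transitivity ((s * q) * u1 + (c * q) * (sg * u2)); [|ring].
    rewrite Es, Ec, <- Hx.
    transitivity (u1 - a1 * (u1 * u1 + u2 * u2) + (1 - sg * sg) * (a1 * u2 * u2 - a2 * u1 * u2));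
      [rewrite HU, Hsg|]; ring.
  - transitivity (u2 - a2); [field; lra|].
    transitivity ((s * q) * u2 + (c * q) * (- sg * u1)); [|ring].
    rewrite Es, Ec, <- Hx.
    transitivity (u2 - a2 * (u1 * u1 + u2 * u2) + (1 - sg * sg) * (a2 * u1 * u1 - a1 * u1 * u2));
      [rewrite HU, Hsg|]; ring.
Qed.

(* At a strictly convex corner with incoming edge [p] and outgoing edge [b], the two halves
   of the fold line make the angle [al/2] with the outward normals of [b] and [p]. *)
Lemma fold_dir_decomp sg p b : sg * sg = 1 -> p <> (0, 0) -> b <> (0, 0) -> sg * cross p b > 0 ->
  let al := ang (vopp p) b in
  let f := unitv (vsub (unitv b) (unitv (vopp p))) in
  f = vadd (vscale (sin (al / 2) / vnorm b) b) (vscale (cos (al / 2) / vnorm b) (perp sg b)) /\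
  vopp f = vadd (vscale (- sin (al / 2) / vnorm p) p) (vscale (cos (al / 2) / vnorm p) (perp sg p)).
Proof.
  intros Hsg Hp Hb Hpb al f.
  set (a := vopp p). assert (Ha : a <> (0, 0)) by apply vopp_neq0, Hp.
  set (U := unitv b). set (A := unitv a).
  pose proof (vnorm_pos b Hb). pose proof (vnorm_pos p Hp).
  assert (Hcr : cross a b <> 0).
  { unfold a. rewrite cross_vopp_l. intros Z. replace (cross p b) with 0 in Hpb by lra. lra. }
  assert (Hal : 0 < al < PI) by (apply ang_pos_lt_PI; auto).
  assert (Hcos : dot A U = cos al) by (apply dot_unitv_ang; auto).
  assert (HAN : dot A (perp sg U) < 0).
  { unfold A, U, a, unitv. rewrite dot_perp, vnorm_vopp.
    replace (cross (vscale (/ vnorm b) b) (vscale (/ vnorm p) (vopp p))) with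
      ((/ vnorm b * / vnorm p) * cross p b)
      by (destruct b, p; unfold cross, vscale, vopp; simpl; ring).
    assert (0 < / vnorm b * / vnorm p) by (apply Rmult_lt_0_compat; apply Rinv_0_lt_compat; lra).
    nra. }
  assert (HUU : dot U U = 1) by (apply unitv_unit; auto).
  assert (HAA : dot A A = 1) by (apply unitv_unit; auto).
  split.
  - unfold f. fold a U A. rewrite (unitv_sub_unit U A sg al) by (auto; lra).
    unfold U, unitv. destruct b. unfold vadd, vscale, perp; simpl. f_equal; field; lra.
  - unfold f. fold a U A.
    replace (vopp (unitv (vsub U A))) with (unitv (vsub A U))
      by (rewrite <- unitv_vopp; f_equal; destruct U, A; unfold vsub, vopp; simpl; f_equal; ring).
    rewrite (unitv_sub_unit A U (- sg) al); [| auto | auto | lra | lra | rewrite dot_comm; auto |].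
    + unfold A, unitv, a. rewrite vnorm_vopp.
      destruct p. unfold vadd, vscale, perp, vopp; simpl. f_equal; field; lra.
    + rewrite dot_perp. rewrite dot_perp, cross_antisym in HAN. lra.
Qed.

Lemma cauchy_schwarz_equality La Lb C K rho rho' :
  0 < La -> 0 < Lb -> C * C + K * K = La * Lb -> 0 < rho -> 0 <= rho' ->
  rho * La - rho' * C <= 0 -> rho' * Lb - rho * C <= 0 ->
  K = 0 /\ rho * La - rho' * C = 0.
Proof.
  intros HLa HLb HCK Hr Hr' Ha Hb.
  assert (HC : 0 < C) by nra.
  assert (Hr'pos : 0 < rho') by nra.
  assert (Hge : La * Lb <= C * C) by nra.
  assert (HK : K = 0) by nra.
  split; [exact HK | nra].
Qed.

Lemma div_le_one a b : 0 < b -> a <= b -> a / b <= 1.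
Proof.
  intros Hb Hab. apply (Rmult_le_reg_r b); [lra|].
  unfold Rdiv. rewrite Rmult_assoc, Rinv_l, Rmult_1_r; lra.
Qed.

Lemma ratio_unit_interval L w rho : 0 < L -> 0 < w ->
  0 <= rho <= w / (2 * L) <-> 0 <= 2 * L * rho / w <= 1.
Proof.
  intros HL Hw. set (k := w / (2 * L)).
  assert (Hk : 0 < k) by (unfold k; apply Rdiv_lt_0_compat; lra).
  replace (2 * L * rho / w) with (rho / k) by (unfold k; field; lra).
  set (q := rho / k). replace rho with (q * k) by (unfold q; field; lra).
  split; intros [H1 H2]; split; nra.
Qed.

(** * Convex polygons and their fold lines *)

Lemma mod_small_cases a n : (a < 2 * n)%nat ->
  (a < n /\ a mod n = a)%nat \/ (n <= a /\ a mod n = a - n)%nat.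
Proof.
  intros H. destruct (Nat.lt_ge_cases a n) as [h|h].
  - left. split; auto. apply Nat.mod_small; auto.
  - right. split; auto.
    replace a with ((a - n) + 1 * n)%nat at 1 by lia.
    rewrite Nat.Div0.mod_add. apply Nat.mod_small. lia.
Qed.

Lemma add_mod_neq n i d : (0 < d < n)%nat -> ((i + d) mod n <> i mod n)%nat.
Proof.
  intros Hd. rewrite <- Nat.Div0.add_mod_idemp_l.
  pose proof (Nat.mod_upper_bound i n ltac:(lia)).
  set (r := (i mod n)%nat) in *.
  destruct (mod_small_cases (r + d) n ltac:(lia)) as [[_ ->]|[? ->]]; lia.
Qed.

Lemma add_mod_congr n i j k : (i mod n = j mod n)%nat -> ((i + k) mod n = (j + k) mod n)%nat.
Proof. intros E. rewrite <- Nat.Div0.add_mod_idemp_l, E. apply Nat.Div0.add_mod_idemp_l. Qed.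

Lemma add_n_mod n i : ((i + n) mod n = i mod n)%nat.
Proof. rewrite <- (Nat.mul_1_l n) at 1. apply Nat.Div0.mod_add. Qed.

Definition edge (n : nat) (v : nat -> pt) (i : nat) : pt := vsub (nxt n v i) (vtx n v i).

(* Coordinates relative to edge [e]: parameter [lam] along the edge, then [rho] edge lengths
   outward. *)
Definition edge_point (n : nat) (v : nat -> pt) (sg : R) (e : nat) (lam rho : R) : pt :=
  vadd (vadd (vtx n v e) (vscale lam (edge n v e))) (vscale rho (perp sg (edge n v e))).

Definition half_tan (n : nat) (v : nat -> pt) (i : nat) : R := tan (int_angle n v i / 2).

Section PolygonIndices.
Variables (n : nat) (v : nat -> pt).
Hypothesis n_pos : (0 < n)%nat.

Lemma vtx_eq_mod i j : (i mod n = j mod n)%nat -> vtx n v i = vtx n v j.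
Proof. unfold vtx. intros ->. reflexivity. Qed.

Lemma S_eq_mod i j : (i mod n = j mod n)%nat -> (S i mod n = S j mod n)%nat.
Proof. rewrite <- (Nat.add_1_r i), <- (Nat.add_1_r j). apply add_mod_congr. Qed.

Lemma pred_eq_mod i j : (i mod n = j mod n)%nat -> ((i + n - 1) mod n = (j + n - 1) mod n)%nat.
Proof.
  replace (i + n - 1)%nat with (i + (n - 1))%nat by lia.
  replace (j + n - 1)%nat with (j + (n - 1))%nat by lia.
  apply add_mod_congr.
Qed.

Lemma edge_eq_mod i j : (i mod n = j mod n)%nat -> edge n v i = edge n v j.
Proof.
  intros E. unfold edge, nxt.
  rewrite (vtx_eq_mod i j E), (vtx_eq_mod (S i) (S j) (S_eq_mod i j E)). reflexivity.
Qed.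

Lemma int_angle_eq_mod i j : (i mod n = j mod n)%nat -> int_angle n v i = int_angle n v j.
Proof.
  intros E. unfold int_angle, prv, nxt.
  rewrite (vtx_eq_mod i j E), (vtx_eq_mod (S i) (S j) (S_eq_mod i j E)),
    (vtx_eq_mod _ _ (pred_eq_mod i j E)). reflexivity.
Qed.

Lemma edge_point_eq_mod sg e e' lam rho : (e mod n = e' mod n)%nat ->
  edge_point n v sg e lam rho = edge_point n v sg e' lam rho.
Proof.
  intros E. unfold edge_point. rewrite (vtx_eq_mod e e' E), (edge_eq_mod e e' E). reflexivity.
Qed.

Lemma half_tan_eq_mod i j : (i mod n = j mod n)%nat -> half_tan n v i = half_tan n v j.
Proof. intros E. unfold half_tan. rewrite (int_angle_eq_mod i j E). reflexivity. Qed.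

Lemma fold_dir_eq_mod i j : (i mod n = j mod n)%nat -> fold_dir n v i = fold_dir n v j.
Proof.
  intros E. unfold fold_dir, prv, nxt.
  rewrite (vtx_eq_mod i j E), (vtx_eq_mod (S i) (S j) (S_eq_mod i j E)),
    (vtx_eq_mod _ _ (pred_eq_mod i j E)). reflexivity.
Qed.

Lemma on_fold_line_eq_mod w i j p : (i mod n = j mod n)%nat ->
  on_fold_line n v w i p -> on_fold_line n v w j p.
Proof.
  intros E. unfold on_fold_line, fold_half.
  rewrite (int_angle_eq_mod i j E), (fold_dir_eq_mod i j E), (vtx_eq_mod i j E). tauto.
Qed.

Lemma succ_pred_mod i : ((S i + n - 1) mod n = i mod n)%nat.
Proof. replace (S i + n - 1)%nat with (i + n)%nat by lia. apply add_n_mod. Qed.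

Lemma pred_succ_mod i : (S (i + n - 1) mod n = i mod n)%nat.
Proof. replace (S (i + n - 1))%nat with (i + n)%nat by lia. apply add_n_mod. Qed.

Lemma S_mod_inj i j : (S i mod n = S j mod n)%nat -> (i mod n = j mod n)%nat.
Proof. intros E. rewrite <- (succ_pred_mod i), <- (succ_pred_mod j). apply pred_eq_mod, E. Qed.

Lemma vtx_pred i : vtx n v i = vadd (vtx n v (i + n - 1)) (edge n v (i + n - 1)).
Proof.
  unfold edge, nxt. rewrite (vtx_eq_mod (S (i + n - 1)) i (pred_succ_mod i)).
  destruct (vtx n v i), (vtx n v (i + n - 1)); unfold vadd, vsub; simpl; f_equal; ring.
Qed.

Lemma prv_sub_vtx i : vsub (prv n v i) (vtx n v i) = vopp (edge n v (i + n - 1)).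
Proof.
  unfold prv. rewrite (vtx_pred i).
  destruct (vtx n v (i + n - 1)), (edge n v (i + n - 1)); unfold vadd, vsub, vopp; simpl;
    f_equal; ring.
Qed.

Lemma int_angle_as_ang i : int_angle n v i = ang (vopp (edge n v (i + n - 1))) (edge n v i).
Proof.
  change (int_angle n v i) with (ang (vsub (prv n v i) (vtx n v i)) (edge n v i)).
  rewrite prv_sub_vtx. reflexivity.
Qed.

End PolygonIndices.

Lemma first_sign_change (g : nat -> R) N : (1 <= N)%nat ->
  0 < g 1%nat -> g N < 0 -> (forall k, (1 <= k < N)%nat -> g k <= 0 -> g (S k) < 0) ->
  exists m, (1 <= m < N)%nat /\ (forall k, (1 <= k <= m)%nat -> 0 < g k) /\
    (forall k, (m < k <= N)%nat -> g k <= 0).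
Proof.
  intros HN Hg1 HgN Hstay.
  destruct (dec_inh_nat_subset_has_unique_least_element (fun k => (1 <= k)%nat /\ g k <= 0))
    as [k0 [[[Hk0 Hgk0] Hmin] _]].
  { intros k. destruct (le_dec 1 k); destruct (Rle_dec (g k) 0); tauto. }
  { exists N. split; [exact HN | lra]. }
  assert (Hk0N : (k0 <= N)%nat) by (apply Hmin; split; [exact HN | lra]).
  assert (Hk02 : (2 <= k0)%nat) by (destruct k0 as [|[|]]; [lia | lra | lia]).
  exists (k0 - 1)%nat. split; [lia | split].
  - intros k Hk. destruct (Rlt_le_dec 0 (g k)) as [|Hle]; auto.
    assert (k0 <= k)%nat by (apply Hmin; split; [lia | exact Hle]). lia.
  - assert (Hafter : forall d, (k0 + d <= N)%nat -> g (k0 + d)%nat <= 0).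
    { induction d as [|d IH]; intros Hd; [rewrite Nat.add_0_r; exact Hgk0|].
      rewrite Nat.add_succ_r. apply Rlt_le, Hstay; [lia | apply IH; lia]. }
    intros k Hk. replace k with (k0 + (k - k0))%nat by lia. apply Hafter. lia.
Qed.

Section ConvexPolygon.
Variables (n : nat) (v : nat -> pt) (sg : R).
Hypothesis n_ge3 : (3 <= n)%nat.
Hypothesis sg_sign : sg = 1 \/ sg = -1.
Hypothesis side_pos : forall i j, (i < n)%nat -> (j < n)%nat -> j <> i -> j <> (S i mod n)%nat ->
  sg * cross (edge n v i) (vsub (v j) (vtx n v i)) > 0.

Local Notation V := (vtx n v).
Local Notation E := (edge n v).

Let n_pos : (0 < n)%nat.
Proof. lia. Qed.

Lemma sg_sqr : sg * sg = 1.
Proof. destruct sg_sign as [-> | ->]; ring. Qed.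

Lemma side_pos_mod i j : (j mod n <> i mod n)%nat -> (j mod n <> S i mod n)%nat ->
  sg * cross (E i) (vsub (V j) (V i)) > 0.
Proof.
  intros Hji HjSi.
  assert (Hi : (i mod n mod n = i mod n)%nat) by apply Nat.Div0.mod_mod.
  pose proof (side_pos (i mod n) (j mod n) (Nat.mod_upper_bound i n ltac:(lia))
    (Nat.mod_upper_bound j n ltac:(lia)) Hji) as H.
  rewrite (edge_eq_mod n v _ i Hi), (vtx_eq_mod n v _ i Hi) in H.
  apply H. rewrite (S_eq_mod n _ i Hi). exact HjSi.
Qed.

Lemma turn_pos i : sg * cross (E i) (E (S i)) > 0.
Proof.
  replace (cross (E i) (E (S i))) with (cross (E i) (vsub (V (S (S i))) (V i))).
  - apply side_pos_mod.
    + replace (S (S i)) with (i + 2)%nat by lia. apply add_mod_neq. lia.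
    + replace (S (S i)) with (S i + 1)%nat by lia. apply add_mod_neq. lia.
  - unfold edge, nxt.
    destruct (V i), (V (S i)), (V (S (S i))); unfold cross, vsub; simpl; ring.
Qed.

Lemma edge_neq0 i : E i <> (0, 0).
Proof.
  intros H. pose proof (turn_pos i) as Ht. rewrite H in Ht.
  unfold cross in Ht; simpl in Ht. lra.
Qed.

Lemma vtx_inj i j : (i < n)%nat -> (j < n)%nat -> V i = V j -> i = j.
Proof.
  intros Hi Hj Hij. destruct (Nat.eq_dec i j) as [|Hne]; auto. exfalso.
  destruct (Nat.eq_dec j (S i mod n)) as [HjS|HjS].
  - apply (edge_neq0 i). unfold edge, nxt.
    rewrite (vtx_eq_mod n v (S i) j) by (rewrite HjS, Nat.Div0.mod_mod; reflexivity).
    rewrite <- Hij. destruct (V i); unfold vsub; simpl; f_equal; ring.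
  - assert (H : sg * cross (E i) (vsub (V j) (V i)) > 0)
      by (apply side_pos_mod; rewrite ?(Nat.mod_small i), ?(Nat.mod_small j); auto).
    rewrite Hij in H. destruct (V j); unfold vsub, cross in H; simpl in H. lra.
Qed.

(* Once an edge direction has passed [- E 0], the later edges stay past it. *)
Lemma cross_edge0_stays_neg k : (1 <= k <= n - 2)%nat ->
  sg * cross (E 0) (E k) <= 0 -> sg * cross (E 0) (E (S k)) < 0.
Proof.
  intros Hk Hgk.
  set (u := vsub (V 0) (V (S k))).
  assert (Hku : sg * cross (E k) u > 0).
  { replace (cross (E k) u) with (cross (E k) (vsub (V 0) (V k))).
    - apply side_pos_mod; rewrite !Nat.mod_small by lia; lia.
    - unfold u, edge, nxt.
      destruct (V 0), (V k), (V (S k)); unfold cross, vsub; simpl; ring. }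
  assert (HSku : sg * cross (E (S k)) u >= 0).
  { destruct (Nat.eq_dec (S k) (n - 1)) as [Hlast|Hlast].
    - replace u with (E (S k)); [rewrite cross_self; lra|].
      unfold u, edge, nxt. f_equal. apply vtx_eq_mod.
      rewrite Hlast. replace (S (n - 1)) with n by lia.
      rewrite Nat.Div0.mod_same, Nat.Div0.mod_0_l. reflexivity.
    - apply Rgt_ge. unfold u.
      apply side_pos_mod; rewrite !Nat.mod_small by lia; lia. }
  assert (H0u : sg * cross (E 0) u < 0).
  { assert (sg * cross (E 0) (vsub (V (S k)) (V 0)) > 0)
      by (apply side_pos_mod; rewrite !Nat.mod_small by lia; lia).
    replace (cross (E 0) u) with (- cross (E 0) (vsub (V (S k)) (V 0))); [lra|].
    unfold u. destruct (E 0), (V 0), (V (S k)); unfold cross, vsub; simpl; ring. }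
  pose proof (turn_pos k) as Hturn.
  assert (Id : (sg * cross (E k) (E (S k))) * (sg * cross (E 0) u) =
    (sg * cross (E k) u) * (sg * cross (E 0) (E (S k)))
    - (sg * cross (E (S k)) u) * (sg * cross (E 0) (E k))).
  { destruct (E k), (E (S k)), (E 0), u; unfold cross; simpl; ring. }
  destruct (Rlt_le_dec (sg * cross (E 0) (E (S k))) 0) as [|Hge]; [assumption|].
  exfalso. nra.
Qed.

Lemma ang_chain r k0 d : r <> (0, 0) ->
  (forall t, (t <= d)%nat -> 0 <= sg * cross r (E (k0 + t))) ->
  ang r (E k0) + rsum (fun t => ang (E (k0 + t)) (E (S (k0 + t)))) d = ang r (E (k0 + d)).
Proof.
  intros Hr. induction d as [|d IH]; intros Hside.
  - simpl. rewrite Nat.add_0_r. ring.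
  - simpl rsum. rewrite <- Rplus_assoc, IH by (intros; apply Hside; lia).
    pose proof (turn_pos (k0 + d)). pose proof (Hside d ltac:(lia)).
    pose proof (Hside (S d) ltac:(lia)) as Hnext. rewrite <- plus_n_Sm in *.
    apply ang_add with sg; auto using edge_neq0; lra.
Qed.

Lemma edge0_cross_sign_change : exists m, (1 <= m < n - 1)%nat /\
  (forall k, (1 <= k <= m)%nat -> 0 < sg * cross (E 0) (E k)) /\
  (forall k, (m < k <= n - 1)%nat -> sg * cross (E 0) (E k) <= 0).
Proof.
  apply (first_sign_change (fun k => sg * cross (E 0) (E k))); [lia | apply turn_pos | |].
  - pose proof (turn_pos (n - 1)) as H.
    rewrite (edge_eq_mod n v (S (n - 1)) 0) in H
      by (replace (S (n - 1)) with n by lia;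
          rewrite Nat.Div0.mod_same, Nat.Div0.mod_0_l; reflexivity).
    rewrite cross_antisym. lra.
  - intros k Hk. apply cross_edge0_stays_neg. lia.
Qed.

(* The directions [E 1], ..., [E m] lie on the side [sg] of [E 0], the later ones on the other
   side; the turning angles chain up to [E m], then to [- E 0], then to [E (n - 1)], and back
   to [E 0], i.e. two half turns. *)
Lemma exterior_angle_sum : rsum (fun i => ang (E (i + n - 1)) (E i)) n = 2 * PI.
Proof.
  destruct edge0_cross_sign_change as [m [Hm [Hpos Hneg]]].
  set (e := vopp (E 0)).
  assert (He : e <> (0, 0)) by apply vopp_neq0, edge_neq0.
  match goal with |- rsum ?f n = _ =>
    replace (rsum f n) with (rsum f (S (n - 1))) by (f_equal; lia) end.
  rewrite rsum_shift.
  rewrite (rsum_ext _ (fun k => ang (E k) (E (S k))))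
    by (intros k _; apply f_equal2; [apply edge_eq_mod, succ_pred_mod; lia | reflexivity]).
  match goal with |- context [rsum ?f (n - 1)] =>
    replace (rsum f (n - 1)) with (rsum f (m + S (n - 2 - m))) by (f_equal; lia) end.
  rewrite rsum_split, rsum_shift, Nat.add_0_r, Nat.add_0_l.
  pose proof (ang_chain (E 0) 0 m (edge_neq0 0)) as Hup. simpl in Hup.
  rewrite ang_self, Rplus_0_l in Hup by apply edge_neq0.
  rewrite Hup by (intros [|k] Hk; [rewrite cross_self; lra | apply Rlt_le, Hpos; lia]).
  assert (Hturn : ang (E m) (E (S m)) = ang (E m) e + ang e (E (S m))).
  { pose proof (Hpos m ltac:(lia)). pose proof (Hneg (S m) ltac:(lia)). pose proof (turn_pos m).
    symmetry. apply ang_add with sg; auto using edge_neq0; unfold e;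
      rewrite ?cross_vopp_l, ?cross_vopp_r, ?(cross_antisym (E m) (E 0)); lra. }
  pose proof (ang_chain e (S m) (n - 2 - m) He) as Hdown.
  rewrite (rsum_ext _ (fun k => ang (E (m + S k)) (E (S (m + S k))))) in Hdown
    by (intros k _; rewrite <- plus_n_Sm; reflexivity).
  replace (S m + (n - 2 - m))%nat with (n - 1)%nat in Hdown by lia.
  rewrite Hturn, <- Rplus_assoc, (Rplus_assoc _ (ang e (E (S m)))), Hdown.
  2:{ intros k Hk. pose proof (Hneg (S m + k)%nat ltac:(lia)). unfold e.
      rewrite cross_vopp_l. lra. }
  assert (Hclose : ang (E (n - 1)) (E 0) = PI - ang e (E (n - 1)))
    by (rewrite <- (vopp_involutive (E 0)); fold e; rewrite ang_vopp_r, ang_sym; reflexivity).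
  assert (Hopen : ang (E m) e = PI - ang (E 0) (E m))
    by (unfold e; rewrite ang_vopp_r, ang_sym; reflexivity).
  rewrite Hclose, Hopen. ring.
Qed.

Lemma int_angle_sum : rsum (int_angle n v) n = (INR n - 2) * PI.
Proof.
  rewrite (rsum_ext _ (fun i => PI + (-1) * ang (E (i + n - 1)) (E i)))
    by (intros k _; rewrite int_angle_as_ang, ang_vopp_l by lia; ring).
  rewrite rsum_plus, rsum_const, rsum_scal, exterior_angle_sum. ring.
Qed.

Lemma int_angle_bounds i : 0 < int_angle n v i < PI.
Proof.
  rewrite int_angle_as_ang by lia. apply ang_pos_lt_PI; auto using vopp_neq0, edge_neq0.
  pose proof (turn_pos (i + n - 1)) as H.
  rewrite (edge_eq_mod n v (S (i + n - 1)) i) in H by (apply pred_succ_mod; lia).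
  rewrite cross_vopp_l. intros Z.
  replace (cross (E (i + n - 1)) (E i)) with 0 in H by lra. lra.
Qed.

Local Notation P := (edge_point n v sg).
Local Notation N i := (perp sg (E i)).
Local Notation t := (half_tan n v).

Lemma vtx_side_neg a j : (j mod n <> a mod n)%nat -> (j mod n <> S a mod n)%nat ->
  dot (vsub (V j) (V a)) (N a) < 0.
Proof. intros H1 H2. rewrite dot_perp. pose proof (side_pos_mod a j H1 H2). lra. Qed.

Lemma vtx_side_nonpos a j : dot (vsub (V j) (V a)) (N a) <= 0.
Proof.
  destruct (Nat.eq_dec (j mod n) (a mod n)) as [Ha|Ha].
  - rewrite (vtx_eq_mod n v j a Ha). destruct (V a), (E a); unfold vsub, dot, perp; simpl; lra.
  - destruct (Nat.eq_dec (j mod n) (S a mod n)) as [HSa|HSa].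
    + rewrite (vtx_eq_mod n v j (S a) HSa), dot_perp.
      change (vsub (V (S a)) (V a)) with (E a). rewrite cross_self. lra.
    + apply Rlt_le, vtx_side_neg; assumption.
Qed.

Lemma edge_point_inj e lam rho lam' rho' :
  P e lam rho = P e lam' rho' -> lam = lam' /\ rho = rho'.
Proof.
  pose proof (dot_self_pos _ (edge_neq0 e)) as HE. pose proof sg_sqr.
  unfold edge_point. destruct (V e), (E e) as [d1 d2].
  unfold vadd, vscale, perp, dot in *; simpl in *. intros Heq. injection Heq as H1 H2.
  assert (A1 : (lam - lam') * d1 + (rho - rho') * sg * d2 = 0) by lra.
  assert (A2 : (lam - lam') * d2 - (rho - rho') * sg * d1 = 0) by lra.
  assert (Hlam : (lam - lam') * (d1 * d1 + d2 * d2) = 0)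
    by (transitivity (d1 * ((lam - lam') * d1 + (rho - rho') * sg * d2)
                      + d2 * ((lam - lam') * d2 - (rho - rho') * sg * d1)); [ring | rewrite A1, A2; ring]).
  assert (Hrho : (rho - rho') * (sg * sg) * (d1 * d1 + d2 * d2) = 0)
    by (transitivity (sg * (d2 * ((lam - lam') * d1 + (rho - rho') * sg * d2)
                      - d1 * ((lam - lam') * d2 - (rho - rho') * sg * d1))); [ring | rewrite A1, A2; ring]).
  rewrite H in Hrho. split; nra.
Qed.

(* Both sides are the offset between the feet of the point on edges [a] and [b], measured
   along the normal of edge [a]. *)
Lemma edge_point_normal_offset a b lam mu rho rho' : P a lam rho = P b mu rho' ->
  (1 - mu) * dot (vsub (V b) (V a)) (N a) + mu * dot (vsub (V (S b)) (V a)) (N a) =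
  rho * dot (E a) (E a) - rho' * dot (E a) (E b).
Proof.
  intros Heq. pose proof sg_sqr as Hsg.
  set (qa := vadd (V a) (vscale lam (E a))). set (qb := vadd (V b) (vscale mu (E b))).
  assert (Hdiff : vsub qb qa = vsub (vscale rho (N a)) (vscale rho' (N b))).
  { unfold edge_point in Heq. fold qa qb in Heq. revert Heq.
    destruct qa, qb, (N a), (N b); unfold vadd, vsub, vscale; simpl.
    intros Heq. injection Heq as H1 H2. f_equal; lra. }
  transitivity (dot (vsub qb qa) (N a)).
  - unfold qa, qb, edge, nxt.
    destruct (V a), (V b), (V (S a)), (V (S b)); unfold vadd, vsub, vscale, perp, dot; simpl; ring.
  - rewrite Hdiff. destruct (E a), (E b). unfold vsub, vscale, perp, dot; simpl.
    transitivity (sg * sg * (rho * (r * r + r0 * r0) - rho' * (r * r1 + r0 * r2))); [ring|].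
    rewrite Hsg. ring.
Qed.

Lemma edge_point_sep_left a b lam mu rho rho' : (a mod n <> b mod n)%nat ->
  0 <= lam <= 1 -> 0 <= mu <= 1 -> 0 <= rho -> 0 <= rho' ->
  P a lam rho = P b mu rho' -> rho = 0.
Proof.
  intros Hab Hlam Hmu Hr Hr' Heq.
  destruct (Rle_lt_or_eq_dec 0 rho Hr) as [Hpos|]; [exfalso|auto].
  pose proof (edge_point_normal_offset a b lam mu rho rho' Heq) as Hoff_a.
  pose proof (edge_point_normal_offset b a mu lam rho' rho (eq_sym Heq)) as Hoff_b.
  rewrite (dot_comm (E b) (E a)) in Hoff_b.
  pose proof (vtx_side_nonpos a b). pose proof (vtx_side_nonpos a (S b)).
  pose proof (vtx_side_nonpos b a). pose proof (vtx_side_nonpos b (S a)).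
  destruct (cauchy_schwarz_equality _ _ _ _ rho rho' (dot_self_pos _ (edge_neq0 a))
    (dot_self_pos _ (edge_neq0 b)) (dot_cross_sqr (E a) (E b)) Hpos Hr') as [HK Hzero];
    [nra | nra |].
  destruct (Rlt_le_dec mu 1) as [Hmu1|Hmu1].
  - assert (HXb : dot (vsub (V b) (V a)) (N a) = 0) by nra.
    destruct (Nat.eq_dec (b mod n) (S a mod n)) as [HbSa|HbSa].
    + rewrite (edge_eq_mod n v b (S a) HbSa) in HK.
      pose proof (turn_pos a) as Ht. rewrite HK in Ht. lra.
    + pose proof (vtx_side_neg a b (not_eq_sym Hab) HbSa). lra.
  - assert (HYb : dot (vsub (V (S b)) (V a)) (N a) = 0) by nra.
    destruct (Nat.eq_dec (S b mod n) (a mod n)) as [HSba|HSba].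
    + rewrite (edge_eq_mod n v a (S b) (eq_sym HSba)), cross_antisym in HK.
      pose proof (turn_pos b) as Ht. replace (cross (E b) (E (S b))) with 0 in Ht by lra. lra.
    + destruct (Nat.eq_dec (S b mod n) (S a mod n)) as [HSS|HSS].
      * apply Hab. symmetry. apply S_mod_inj; auto.
      * pose proof (vtx_side_neg a (S b) HSba HSS). lra.
Qed.

Lemma edge_point_sep a b lam mu rho rho' : (a mod n <> b mod n)%nat ->
  0 <= lam <= 1 -> 0 <= mu <= 1 -> 0 <= rho -> 0 <= rho' ->
  P a lam rho = P b mu rho' -> rho = 0 /\ rho' = 0.
Proof.
  intros Hab Hlam Hmu Hr Hr' Heq. split.
  - apply (edge_point_sep_left a b lam mu rho rho'); assumption.
  - apply (edge_point_sep_left b a mu lam rho' rho); auto.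
Qed.

Lemma half_tan_pos i : 0 < t i.
Proof. pose proof (int_angle_bounds i). unfold half_tan. apply tan_gt_0; lra. Qed.

Lemma fold_dir_edges i :
  let al := int_angle n v i in
  fold_dir n v i = vadd (vscale (sin (al / 2) / vnorm (E i)) (E i))
                        (vscale (cos (al / 2) / vnorm (E i)) (N i)) /\
  vopp (fold_dir n v i) =
    vadd (vscale (- sin (al / 2) / vnorm (E (i + n - 1))) (E (i + n - 1)))
         (vscale (cos (al / 2) / vnorm (E (i + n - 1))) (N (i + n - 1))).
Proof.
  pose proof (turn_pos (i + n - 1)) as Hturn.
  rewrite (edge_eq_mod n v (S (i + n - 1)) i) in Hturn by (apply pred_succ_mod; lia).
  pose proof (fold_dir_decomp sg _ _ sg_sqr (edge_neq0 (i + n - 1)) (edge_neq0 i) Hturn) as Hdec.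
  rewrite <- int_angle_as_ang in Hdec by lia.
  change (fold_dir n v i) with (unitv (vsub (unitv (E i)) (unitv (vsub (prv n v i) (V i))))).
  rewrite prv_sub_vtx by lia. exact Hdec.
Qed.

Lemma fold_line_forward w i tau : 0 < w ->
  vadd (V i) (vscale (tau * fold_half n v w i) (fold_dir n v i)) =
  P i (tau * w / (2 * vnorm (E i)) * t i) (tau * w / (2 * vnorm (E i))).
Proof.
  intros Hw. destruct (fold_dir_edges i) as [Hf _]. rewrite Hf.
  pose proof (vnorm_pos _ (edge_neq0 i)). pose proof (int_angle_bounds i).
  assert (0 < cos (int_angle n v i / 2)) by (apply cos_gt_0; lra).
  unfold edge_point, fold_half, half_tan, tan.
  destruct (V i), (E i), (N i); unfold vadd, vscale; simpl. f_equal; field; lra.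
Qed.

Lemma fold_line_backward w i tau : 0 < w ->
  vadd (V i) (vscale (tau * fold_half n v w i) (fold_dir n v i)) =
  P (i + n - 1) (1 + tau * w / (2 * vnorm (E (i + n - 1))) * t i)
    (- tau * w / (2 * vnorm (E (i + n - 1)))).
Proof.
  intros Hw. destruct (fold_dir_edges i) as [_ Hf].
  rewrite <- (vopp_involutive (fold_dir n v i)), Hf, (vtx_pred n v ltac:(lia) i).
  pose proof (vnorm_pos _ (edge_neq0 (i + n - 1))). pose proof (int_angle_bounds i).
  assert (0 < cos (int_angle n v i / 2)) by (apply cos_gt_0; lra).
  unfold edge_point, fold_half, half_tan, tan.
  destruct (V (i + n - 1)), (E (i + n - 1)), (N (i + n - 1)); unfold vadd, vscale, vopp; simpl.
  f_equal; field; lra.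
Qed.

(* The half of fold line [i] with [tau >= 0] lies over edge [i], the other half over
   edge [i - 1]. *)
Lemma on_fold_line_iff w i p : 0 < w ->
  on_fold_line n v w i p <->
  (exists rho, 0 <= rho <= w / (2 * vnorm (E i)) /\ p = P i (rho * t i) rho) \/
  (exists rho, 0 <= rho <= w / (2 * vnorm (E (i + n - 1))) /\
     p = P (i + n - 1) (1 - rho * t i) rho).
Proof.
  intros Hw. pose proof (vnorm_pos _ (edge_neq0 i)) as L.
  pose proof (vnorm_pos _ (edge_neq0 (i + n - 1))) as L'.
  unfold on_fold_line. split.
  - intros [tau [Htau ->]]. destruct (Rle_lt_dec 0 tau) as [Hpos|Hneg].
    + left. exists (tau * w / (2 * vnorm (E i))). rewrite fold_line_forward by auto.
      split; [|reflexivity]. apply ratio_unit_interval; auto.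
      replace (2 * vnorm (E i) * (tau * w / (2 * vnorm (E i))) / w) with tau by (field; lra). lra.
    + right. exists (- tau * w / (2 * vnorm (E (i + n - 1)))). rewrite fold_line_backward by auto.
      split; [|f_equal; field; lra]. apply ratio_unit_interval; auto.
      replace (2 * vnorm (E (i + n - 1)) * (- tau * w / (2 * vnorm (E (i + n - 1)))) / w)
        with (- tau) by (field; lra). lra.
  - intros [[rho [Hrho ->]] | [rho [Hrho ->]]].
    + apply ratio_unit_interval in Hrho; auto.
      exists (2 * vnorm (E i) * rho / w). rewrite fold_line_forward by auto.
      split; [lra | f_equal; field; lra].
    + apply ratio_unit_interval in Hrho; auto.
      exists (- (2 * vnorm (E (i + n - 1)) * rho / w)). rewrite fold_line_backward by auto.
      split; [lra | f_equal; field; lra].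
Qed.

Lemma ribbon_gap w : folded_ribbon n v w -> forall i, w / 2 * (t i + t (S i)) < vnorm (E i).
Proof.
  intros [Hw Hdis] i.
  destruct (Rlt_le_dec (w / 2 * (t i + t (S i))) (vnorm (E i))) as [|Hle]; [assumption|exfalso].
  pose proof (half_tan_pos i). pose proof (half_tan_pos (S i)).
  pose proof (vnorm_pos _ (edge_neq0 i)) as L.
  (* the two fold lines over edge [i] meet where their parameters add up to 1 *)
  set (rho := / (t i + t (S i))).
  assert (Hrho : 0 <= rho <= w / (2 * vnorm (E i))).
  { apply ratio_unit_interval; auto. unfold rho.
    replace (2 * vnorm (E i) * / (t i + t (S i)) / w) with (vnorm (E i) / (w / 2 * (t i + t (S i))))
      by (field; lra).
    split; [apply Rlt_le, Rdiv_lt_0_compat; nra|].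
    apply div_le_one; nra. }
  set (p := P i (rho * t i) rho).
  assert (Hon_i : on_fold_line n v w i p) by (apply on_fold_line_iff; eauto).
  assert (Hon_Si : on_fold_line n v w (S i) p).
  { apply on_fold_line_iff; auto. right. exists rho.
    rewrite (edge_eq_mod n v (S i + n - 1) i), (edge_point_eq_mod n v sg (S i + n - 1) i)
      by (apply succ_pred_mod; lia).
    split; [exact Hrho|]. unfold p, rho. f_equal. field. lra. }
  apply (Hdis (i mod n) (S i mod n)) with p.
  - apply Nat.mod_upper_bound; lia.
  - apply Nat.mod_upper_bound; lia.
  - rewrite <- Nat.add_1_r. apply not_eq_sym, add_mod_neq. lia.
  - apply (on_fold_line_eq_mod n v ltac:(lia) w i); [rewrite Nat.Div0.mod_mod|]; auto.
  - apply (on_fold_line_eq_mod n v ltac:(lia) w (S i)); [rewrite Nat.Div0.mod_mod|]; auto.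
Qed.

Section GapSufficient.
Variable w : R.
Hypothesis w_pos : 0 < w.
Hypothesis gap : forall i, w / 2 * (t i + t (S i)) < vnorm (E i).

Lemma forward_param_bound i rho : 0 <= rho <= w / (2 * vnorm (E i)) -> 0 <= rho * t i <= 1.
Proof.
  intros Hrho. pose proof (half_tan_pos i). pose proof (half_tan_pos (S i)).
  pose proof (gap i). pose proof (vnorm_pos _ (edge_neq0 i)).
  apply ratio_unit_interval in Hrho; auto.
  set (q := 2 * vnorm (E i) * rho / w) in Hrho.
  replace (rho * t i) with (q * (w / 2 * t i / vnorm (E i))) by (unfold q; field; lra).
  assert (0 < w / 2 * t i / vnorm (E i) <= 1); [|nra].
  split; [apply Rdiv_lt_0_compat; nra | apply div_le_one; nra].
Qed.

Lemma backward_param_bound i rho : 0 <= rho <= w / (2 * vnorm (E (i + n - 1))) ->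
  0 <= 1 - rho * t i <= 1.
Proof.
  intros Hrho. pose proof (half_tan_pos i). pose proof (half_tan_pos (i + n - 1)).
  pose proof (gap (i + n - 1)) as Hg. pose proof (vnorm_pos _ (edge_neq0 (i + n - 1))).
  rewrite (half_tan_eq_mod n v ltac:(lia) (S (i + n - 1)) i) in Hg by (apply pred_succ_mod; lia).
  apply ratio_unit_interval in Hrho; auto.
  set (q := 2 * vnorm (E (i + n - 1)) * rho / w) in Hrho.
  replace (rho * t i) with (q * (w / 2 * t i / vnorm (E (i + n - 1)))) by (unfold q; field; lra).
  assert (0 < w / 2 * t i / vnorm (E (i + n - 1)) <= 1); [|nra].
  split; [apply Rdiv_lt_0_compat; nra | apply div_le_one; nra].
Qed.

Lemma fold_halves_same_edge i rho rho' : 0 <= rho <= w / (2 * vnorm (E i)) ->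
  P i (rho * t i) rho <> P i (1 - rho' * t (S i)) rho'.
Proof.
  intros Hrho Heq. apply edge_point_inj in Heq as [Hlam <-].
  pose proof (gap i). pose proof (vnorm_pos _ (edge_neq0 i)).
  pose proof (half_tan_pos i). pose proof (half_tan_pos (S i)).
  assert (Hsum : rho * (t i + t (S i)) = 1) by lra.
  assert (Hw : rho * (2 * vnorm (E i)) <= w).
  { destruct Hrho as [_ Hrho]. apply (Rmult_le_compat_r (2 * vnorm (E i))) in Hrho; [|lra].
    replace (w / (2 * vnorm (E i)) * (2 * vnorm (E i))) with w in Hrho by (field; lra).
    exact Hrho. }
  nra.
Qed.

Lemma fold_forward_vertex i : P i (0 * t i) 0 = V i.
Proof.
  unfold edge_point. destruct (V i), (E i); unfold vadd, vscale, perp; simpl; f_equal; ring.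
Qed.

Lemma fold_backward_vertex i : P (i + n - 1) (1 - 0 * t i) 0 = V i.
Proof.
  unfold edge_point. rewrite (vtx_pred n v ltac:(lia) i).
  destruct (V (i + n - 1)), (E (i + n - 1)); unfold vadd, vscale, perp; simpl; f_equal; ring.
Qed.

Lemma fold_forward_backward_disjoint i j rho rho' : (i < n)%nat -> (j < n)%nat -> i <> j ->
  0 <= rho <= w / (2 * vnorm (E i)) -> 0 <= rho' <= w / (2 * vnorm (E (j + n - 1))) ->
  P i (rho * t i) rho <> P (j + n - 1) (1 - rho' * t j) rho'.
Proof.
  intros Hi Hj Hij Hrho Hrho' Heq.
  destruct (Nat.eq_dec (i mod n) ((j + n - 1) mod n)) as [Hsame|Hdiff].
  - assert (HjSi : (j mod n = S i mod n)%nat)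
      by (rewrite <- (pred_succ_mod n ltac:(lia) j); symmetry; apply S_eq_mod, Hsame).
    rewrite (edge_point_eq_mod n v sg (j + n - 1) i _ _ (eq_sym Hsame)),
      (half_tan_eq_mod n v ltac:(lia) j (S i) HjSi) in Heq.
    exact (fold_halves_same_edge i rho rho' Hrho Heq).
  - destruct (edge_point_sep _ _ _ _ rho rho' Hdiff (forward_param_bound i rho Hrho)
      (backward_param_bound j rho' Hrho') ltac:(lra) ltac:(lra) Heq) as [-> ->].
    rewrite fold_forward_vertex, fold_backward_vertex in Heq.
    exact (Hij (vtx_inj i j Hi Hj Heq)).
Qed.

Lemma folds_disjoint_of_gap : folds_disjoint n v w.
Proof.
  intros i j Hi Hj Hij p Hpi Hpj.
  apply on_fold_line_iff in Hpi, Hpj; auto.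
  destruct Hpi as [[r [Hr ->]] | [r [Hr ->]]]; destruct Hpj as [[r' [Hr' Heq]] | [r' [Hr' Heq]]].
  - assert (Hdiff : (i mod n <> j mod n)%nat) by (rewrite !Nat.mod_small; auto).
    destruct (edge_point_sep _ _ _ _ r r' Hdiff (forward_param_bound i r Hr)
      (forward_param_bound j r' Hr') ltac:(lra) ltac:(lra) Heq) as [-> ->].
    rewrite !fold_forward_vertex in Heq. exact (Hij (vtx_inj i j Hi Hj Heq)).
  - exact (fold_forward_backward_disjoint i j r r' Hi Hj Hij Hr Hr' Heq).
  - exact (fold_forward_backward_disjoint j i r' r Hj Hi (not_eq_sym Hij) Hr' Hr (eq_sym Heq)).
  - assert (Hdiff : ((i + n - 1) mod n <> (j + n - 1) mod n)%nat).
    { intros Hsame. apply S_eq_mod in Hsame.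
      rewrite !pred_succ_mod, !Nat.mod_small in Hsame by lia. auto. }
    destruct (edge_point_sep _ _ _ _ r r' Hdiff (backward_param_bound i r Hr)
      (backward_param_bound j r' Hr') ltac:(lra) ltac:(lra) Heq) as [-> ->].
    rewrite !fold_backward_vertex in Heq. exact (Hij (vtx_inj i j Hi Hj Heq)).
Qed.

End GapSufficient.

Lemma convex_nondegenerate : nondegenerate n v.
Proof.
  intros i Hi. split.
  - intros H. apply (edge_neq0 i). unfold edge. rewrite H.
    destruct (V i); unfold vsub; simpl; f_equal; ring.
  - replace (vsub (V i) (prv n v i)) with (E (i + n - 1)).
    + pose proof (turn_pos (i + n - 1)) as Hturn.
      rewrite (edge_eq_mod n v (S (i + n - 1)) i) in Hturn by (apply pred_succ_mod; lia).
      intros Z. change (vsub (nxt n v i) (V i)) with (E i) in Z. rewrite Z in Hturn. lra.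
    + unfold prv. rewrite (vtx_pred n v ltac:(lia) i).
      destruct (V (i + n - 1)), (E (i + n - 1)); unfold vadd, vsub; simpl; f_equal; ring.
Qed.

End ConvexPolygon.

(** * The lower bound *)

Lemma tan_above_tangent b y : 0 < b < PI / 2 -> 0 < y < PI / 2 ->
  tan b + (y - b) * (1 + tan b ^ 2) <= tan y.
Proof.
  intros Hb Hy. pose proof PI_RGT_0.
  assert (Hder : forall c, 0 < c < PI / 2 -> derivable_pt_lim tan c (1 + tan c ^ 2)).
  { intros c Hc. assert (Hc' : - PI / 2 < c < PI / 2) by lra.
    apply derive_pt_eq_1 with (derivable_pt_tan c Hc'). apply derive_pt_tan. }
  destruct (Rtotal_order y b) as [Hlt|[->|Hgt]]; [| lra |].
  - destruct (MVT_cor2 tan (fun x => 1 + tan x ^ 2) y b Hlt) as [c [Ec Hc]].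
    { intros c Hc. apply Hder. lra. }
    assert (tan c < tan b) by (apply tan_increasing; lra).
    assert (0 < tan c) by (apply tan_gt_0; lra).
    assert (tan c ^ 2 <= tan b ^ 2) by (simpl; nra).
    assert ((1 + tan c ^ 2) * (b - y) <= (1 + tan b ^ 2) * (b - y)) by nra.
    lra.
  - destruct (MVT_cor2 tan (fun x => 1 + tan x ^ 2) b y Hgt) as [c [Ec Hc]].
    { intros c Hc. apply Hder. lra. }
    assert (tan b < tan c) by (apply tan_increasing; lra).
    assert (0 < tan b) by (apply tan_gt_0; lra).
    assert (tan b ^ 2 <= tan c ^ 2) by (simpl; nra).
    assert ((1 + tan b ^ 2) * (y - b) <= (1 + tan c ^ 2) * (y - b)) by nra.
    lra.
Qed.

(* Jensen's inequality for the convex function [tan] on [(0, PI/2)], via its tangent at the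
   mean value [PI/2 - PI/N] of the half-angles. *)
Lemma sum_tan_half_ge (a : nat -> R) N : (3 <= N)%nat ->
  (forall i, (i < N)%nat -> 0 < a i < PI) -> rsum a N = (INR N - 2) * PI ->
  INR N * (cos (PI / INR N) / sin (PI / INR N)) <= rsum (fun i => tan (a i / 2)) N.
Proof.
  intros HN Ha Hsum. pose proof PI_RGT_0.
  assert (HN3 : 3 <= INR N) by (replace 3 with (INR 3) by (simpl; lra); apply le_INR; exact HN).
  set (b := PI / 2 - PI / INR N).
  assert (Hb : 0 < b < PI / 2).
  { unfold b. assert (0 < PI / INR N) by (apply Rdiv_lt_0_compat; lra).
    assert (PI / INR N < PI / 2); [|lra].
    apply Rmult_lt_compat_l; [lra|]. apply Rinv_lt_contravar; lra. }
  replace (cos (PI / INR N) / sin (PI / INR N)) with (tan b)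
    by (unfold tan, b; rewrite sin_shift, cos_shift; reflexivity).
  set (K := 1 + tan b ^ 2).
  apply Rle_trans with (rsum (fun i => tan b + (a i / 2 - b) * K) N).
  - rewrite (rsum_ext _ (fun i => (tan b - b * K) + (/ 2 * K) * a i)) by (intros; field).
    rewrite rsum_plus, rsum_const, rsum_scal, Hsum.
    unfold b. apply Req_le. field. lra.
  - apply rsum_le. intros k Hk. pose proof (Ha k Hk). apply tan_above_tangent; lra.
Qed.

Lemma poly_len_edges n v : poly_len n v = rsum (fun i => vnorm (edge n v i)) n.
Proof. unfold poly_len. rewrite fold_right_map_seq. reflexivity. Qed.

Lemma ribbonlength_gt n v w : (3 <= n)%nat -> convex_polygon n v -> folded_ribbon n v w ->
  INR n * (cos (PI / INR n) / sin (PI / INR n)) < ribbonlength n v w.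
Proof.
  intros Hn [sg [Hsg Hside]] Hrib.
  pose proof (ribbon_gap n v sg Hn Hsg Hside w Hrib) as Hgap.
  destruct Hrib as [Hw _].
  assert (Htan : INR n * (cos (PI / INR n) / sin (PI / INR n)) <= rsum (half_tan n v) n).
  { apply sum_tan_half_ge; auto.
    - intros i _. apply (int_angle_bounds n v sg); auto.
    - apply (int_angle_sum n v sg); auto. }
  assert (Hcyc : rsum (fun i => half_tan n v (S i)) n = rsum (half_tan n v) n).
  { rewrite rsum_shift1, (half_tan_eq_mod n v ltac:(lia) n 0)
      by (rewrite Nat.Div0.mod_same, Nat.Div0.mod_0_l; reflexivity). ring. }
  assert (Hlen : w * rsum (half_tan n v) n < poly_len n v).
  { rewrite poly_len_edges.
    apply Rle_lt_trans with (rsum (fun i => w / 2 * (half_tan n v i + half_tan n v (S i))) n).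
    - rewrite rsum_scal, rsum_plus, Hcyc. lra.
    - apply rsum_lt; [lia|]. intros i _. apply Hgap. }
  unfold ribbonlength. apply (Rmult_lt_reg_r w); auto.
  replace (poly_len n v / w * w) with (poly_len n v) by (field; lra). nra.
Qed.

(** * Regular polygons *)

Definition root_of_unity (n k : nat) : pt :=
  (cos (INR k * (2 * PI / INR n)), sin (INR k * (2 * PI / INR n))).

Section RegularPolygon.
Variable n : nat.
Hypothesis n_ge3 : (3 <= n)%nat.

Local Notation th := (2 * PI / INR n).
Local Notation z := (root_of_unity n).
Local Notation E := (edge n z).

Let INR_n_ge3 : 3 <= INR n.
Proof. replace 3 with (INR 3) by (simpl; lra). apply le_INR, n_ge3. Qed.

Lemma root_of_unity_mod k : z (k mod n) = z k.
Proof.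
  unfold root_of_unity.
  assert (E : INR k * th = INR (k mod n) * th + 2 * INR (k / n) * PI).
  { rewrite (Nat.div_mod_eq k n) at 1. rewrite plus_INR, mult_INR. field. lra. }
  rewrite E, cos_period, sin_period. reflexivity.
Qed.

Lemma vtx_root k : vtx n z k = z k.
Proof. apply root_of_unity_mod. Qed.

Lemma dot_root a b : dot (z a) (z b) = cos ((INR a - INR b) * th).
Proof. unfold root_of_unity, dot; simpl. rewrite Rmult_minus_distr_r, cos_minus. ring. Qed.

Lemma cross_root a b : cross (z a) (z b) = sin ((INR b - INR a) * th).
Proof. unfold root_of_unity, cross; simpl. rewrite Rmult_minus_distr_r, sin_minus. ring. Qed.

Lemma edge_dot_root a b : dot (E a) (E b) =
  2 * cos ((INR a - INR b) * th) - cos ((INR a - INR b + 1) * th) - cos ((INR a - INR b - 1) * th).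
Proof.
  unfold edge, nxt. rewrite !vtx_root, dot_vsub4, !dot_root, !S_INR.
  replace (INR a + 1 - (INR b + 1)) with (INR a - INR b) by ring.
  replace (INR a + 1 - INR b) with (INR a - INR b + 1) by ring.
  replace (INR a - (INR b + 1)) with (INR a - INR b - 1) by ring.
  ring.
Qed.

Lemma edge_cross_root i j : cross (E i) (vsub (z j) (z i)) =
  sin ((INR j - INR i - 1) * th) + sin th - sin ((INR j - INR i) * th).
Proof.
  unfold edge, nxt. rewrite !vtx_root, cross_vsub_l, !cross_vsub_r, cross_self, !cross_root, !S_INR.
  replace ((INR i - (INR i + 1)) * th) with (- th) by ring. rewrite sin_neg.
  replace (INR j - (INR i + 1)) with (INR j - INR i - 1) by ring.
  ring.
Qed.

Lemma root_turn_pos m : (2 <= m <= n - 1)%nat ->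
  0 < sin ((INR m - 1) * th) + sin th - sin (INR m * th).
Proof.
  intros Hm. pose proof PI_RGT_0.
  assert (Hm2 : 2 <= INR m) by (replace 2 with (INR 2) by (simpl; lra); apply le_INR; lia).
  assert (Hmn : INR m <= INR n - 1)
    by (replace 1 with (INR 1) by reflexivity; rewrite <- minus_INR by lia; apply le_INR; lia).
  set (u := PI / INR n).
  assert (Hu : 0 < u) by (apply Rdiv_lt_0_compat; lra).
  assert (Hun : u * INR n = PI) by (unfold u; field; lra).
  assert (Hth : th = 2 * u) by (unfold u; field; lra).
  set (X := (2 * INR m - 1) * u).
  replace ((INR m - 1) * th) with (X - u) by (rewrite Hth; unfold X; ring).
  replace (INR m * th) with (X + u) by (rewrite Hth; unfold X; ring).
  rewrite Hth, sin_minus, sin_plus, sin_2a.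
  replace (sin X * cos u - cos X * sin u + 2 * sin u * cos u - (sin X * cos u + cos X * sin u))
    with (2 * sin u * (cos u - cos X)) by ring.
  assert (Hsu : 0 < sin u) by (apply sin_gt_0; nra).
  assert (HuX : u < X) by (unfold X; nra).
  assert (HXu : 3 * u <= 2 * PI - X) by (unfold X; nra).
  assert (cos X < cos u).
  { destruct (Rle_lt_dec X PI).
    - apply cos_decreasing_1; lra.
    - replace (cos X) with (cos (2 * PI - X)) by (rewrite cos_minus, cos_2PI, sin_2PI; ring).
      apply cos_decreasing_1; lra. }
  nra.
Qed.

Lemma cyclic_offset i j : (i < n)%nat -> (j < n)%nat -> j <> i -> j <> (S i mod n)%nat ->
  exists m, (2 <= m <= n - 1)%nat /\ (j = i + m \/ j + n = i + m)%nat.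
Proof.
  intros Hi Hj Hji HjSi.
  destruct (mod_small_cases (S i) n ltac:(lia)) as [[? HSi]|[? HSi]]; rewrite HSi in HjSi;
    destruct (Nat.lt_ge_cases i j).
  - exists (j - i)%nat. lia.
  - exists (j + n - i)%nat. lia.
  - lia.
  - exists (j + n - i)%nat. lia.
Qed.

Lemma root_convex : convex_polygon n z.
Proof.
  exists 1. split; [left; reflexivity|]. intros i j Hi Hj Hji HjSi.
  change (vsub (nxt n z i) (vtx n z i)) with (E i).
  rewrite vtx_root, Rmult_1_l, edge_cross_root.
  destruct (cyclic_offset i j Hi Hj Hji HjSi) as [m [Hm [Hd|Hd]]];
    apply (f_equal INR) in Hd; rewrite !plus_INR in Hd; pose proof (root_turn_pos m Hm).
  - replace (INR j - INR i) with (INR m) by lra. lra.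
  - replace (INR j - INR i) with (INR m - INR n) by lra.
    rewrite <- (sin_period ((INR m - INR n - 1) * th) 1), <- (sin_period ((INR m - INR n) * th) 1).
    replace ((INR m - INR n - 1) * th + 2 * INR 1 * PI) with ((INR m - 1) * th)
      by (simpl; field; lra).
    replace ((INR m - INR n) * th + 2 * INR 1 * PI) with (INR m * th) by (simpl; field; lra).
    lra.
Qed.

Lemma root_ang_shift a b a' b' : INR a - INR b = INR a' - INR b' ->
  ang (E a) (E b) = ang (E a') (E b').
Proof. intros H. unfold ang, vnorm. rewrite !edge_dot_root, H, !Rminus_diag. reflexivity. Qed.

Lemma root_regular : regular_polygon n z.
Proof.
  pose proof root_convex as Hcv. destruct root_convex as [s [Hs Hside]].
  split; [apply (convex_nondegenerate n z s); auto|]. split; [exact Hcv|].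
  intros i j Hi Hj. split.
  - change (vnorm (E i) = vnorm (E j)).
    unfold vnorm. rewrite !edge_dot_root, !Rminus_diag. reflexivity.
  - rewrite !int_angle_as_ang, !ang_vopp_l by lia. f_equal. apply root_ang_shift.
    replace (i + n - 1)%nat with (i + (n - 1))%nat by lia.
    replace (j + n - 1)%nat with (j + (n - 1))%nat by lia.
    rewrite !plus_INR. ring.
Qed.

End RegularPolygon.

Lemma regular_int_angle n v : (3 <= n)%nat -> regular_polygon n v ->
  forall i, int_angle n v i = PI - 2 * PI / INR n.
Proof.
  intros Hn [_ [[sg [Hsg Hside]] Heq]] i.
  assert (Hn0 : 0 < INR n) by (apply lt_0_INR; lia).
  pose proof (int_angle_sum n v sg Hn Hsg Hside) as Hsum.
  rewrite (rsum_ext _ (fun _ => int_angle n v 0)), rsum_const in Hsum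
    by (intros k Hk; apply (Heq k 0%nat); lia).
  rewrite (int_angle_eq_mod n v ltac:(lia) i (i mod n)) by (rewrite Nat.Div0.mod_mod; reflexivity).
  destruct (Heq (i mod n) 0%nat ltac:(apply Nat.mod_upper_bound; lia) ltac:(lia)) as [_ ->].
  apply (Rmult_eq_reg_l (INR n)); [rewrite Hsum; field|]; lra.
Qed.

Lemma regular_int_angle_bounds n v : (4 <= n)%nat -> regular_polygon n v ->
  forall i, PI / 2 <= int_angle n v i < PI.
Proof.
  intros Hn Hreg i. rewrite (regular_int_angle n v) by (auto; lia).
  assert (4 <= INR n) by (replace 4 with (INR 4) by (simpl; lra); apply le_INR, Hn).
  pose proof PI_RGT_0.
  assert (0 < 2 * PI / INR n <= PI / 2); [|lra].
  split; [apply Rdiv_lt_0_compat; lra|].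
  apply (Rmult_le_reg_r (INR n)); [lra|]. field_simplify; nra.
Qed.

Lemma regular_ribbonlength_approx n v : (3 <= n)%nat -> regular_polygon n v ->
  forall eps, 0 < eps -> exists w, folded_ribbon n v w /\
    ribbonlength n v w < INR n * (cos (PI / INR n) / sin (PI / INR n)) + eps.
Proof.
  intros Hn Hreg eps Heps.
  pose proof (regular_int_angle n v Hn Hreg) as Hangle.
  destruct Hreg as [_ [[sg [Hsg Hside]] Heq]].
  assert (Hn0 : 0 < INR n) by (apply lt_0_INR; lia).
  set (cot := cos (PI / INR n) / sin (PI / INR n)).
  assert (Htan : forall i, half_tan n v i = cot).
  { intros i. unfold half_tan, cot. rewrite Hangle.
    replace ((PI - 2 * PI / INR n) / 2) with (PI / 2 - PI / INR n) by (field; lra).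
    unfold tan. rewrite sin_shift, cos_shift. reflexivity. }
  assert (Hcot : 0 < cot) by (rewrite <- (Htan 0%nat); apply (half_tan_pos n v sg); auto).
  set (L := vnorm (edge n v 0)).
  assert (HL : forall i, vnorm (edge n v i) = L).
  { intros i. rewrite (edge_eq_mod n v i (i mod n)) by (rewrite Nat.Div0.mod_mod; reflexivity).
    apply (Heq (i mod n) 0%nat); [apply Nat.mod_upper_bound|]; lia. }
  assert (HL0 : 0 < L) by (apply vnorm_pos, (edge_neq0 n v sg); auto).
  set (delta := eps / (2 * INR n)).
  assert (Hdelta : 0 < delta) by (apply Rdiv_lt_0_compat; lra).
  (* at width [L / cot] the fold lines over each edge would touch *)
  exists (L / (cot + delta)).
  assert (Hw : 0 < L / (cot + delta)) by (apply Rdiv_lt_0_compat; lra).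
  split.
  - split; [exact Hw|]. apply (folds_disjoint_of_gap n v sg); auto.
    intros i. rewrite !Htan, HL.
    replace (L / (cot + delta) / 2 * (cot + cot)) with (L * (cot / (cot + delta))) by (field; lra).
    assert (cot / (cot + delta) < 1)
      by (apply (Rmult_lt_reg_r (cot + delta)); [lra|]; field_simplify; lra).
    nra.
  - unfold ribbonlength. rewrite poly_len_edges, (rsum_ext _ (fun _ => L)), rsum_const
      by (intros; apply HL).
    replace (INR n * L / (L / (cot + delta))) with (INR n * cot + INR n * delta) by (field; lra).
    replace (INR n * delta) with (eps / 2) by (unfold delta; field; lra).
    lra.
Qed.

Theorem theorem6p5 (n : nat) (Hn : (4 <= n)%nat) :
  (forall (v : nat -> pt) (w : R),
     nondegenerate n v -> convex_polygon n v ->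
     (forall i, (i < n)%nat -> PI / 2 <= int_angle n v i < PI) ->
     folded_ribbon n v w ->
     INR n * (cos (PI / INR n) / sin (PI / INR n)) <= ribbonlength n v w) /\
  (exists v : nat -> pt, regular_polygon n v) /\
  (forall v : nat -> pt, regular_polygon n v ->
     (forall i, (i < n)%nat -> PI / 2 <= int_angle n v i < PI) /\
     forall eps : R, 0 < eps -> exists w : R,
       folded_ribbon n v w /\
       ribbonlength n v w < INR n * (cos (PI / INR n) / sin (PI / INR n)) + eps).
Proof.
  split; [|split].
  - (* strict convexity already gives non-degeneracy and [0 < int_angle n v i < PI] *)
    intros v w _ Hcv _ Hrib. apply Rlt_le, ribbonlength_gt; auto. lia.
  - exists (root_of_unity n). apply root_regular. lia.
  - intros v Hreg. split.
    + intros i _. apply regular_int_angle_bounds; auto.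
    + apply regular_ribbonlength_approx; auto. lia.
Qed.
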